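(* If $d: t \to_w^* u$ is a reduction sequence, then $t \to_{w\neg gcv}^{k} \to_{wgcv}^{h} u$ where $k$ is the number of $\to_{w\neg gcv}$ steps in $d$ and $h$ is greater than or equal to the number of $\to_{wgcv}$ steps in $d$.
   Context: Terms: $t,u,s ::= x \mid \lambda x.t \mid t\,u \mid t[x\backslash u]$, where $t[x\backslash u]$ is an explicit substitution binding $x$ in $t$; terms up to $\alpha$-renaming. Values: $v ::= \lambda x.t$. Substitution contexts: $S ::= \langle\cdot\rangle \mid S[x\backslash u]$. Weak contexts: $W ::= \langle\cdot\rangle \mid W\,t \mid t\,W \mid t[x\backslash W] \mid W[x\backslash u]$. $W\langle\langle t\rangle\rangle$ denotes plugging where $W$ does not capture free variables of $t$. Root rules: $S\langle \lambda x.t\rangle u \mapsto_m S\langle t[x\backslash u]\rangle$; $W\langle\langle x\rangle\rangle[x\backslash u] \mapsto_{e} W\langle\langle u\rangle\rangle[x\backslash u]$ ($W$ weak context); $t[x\backslash S\langle v\rangle] \mapsto_{gcv} S\langle t\rangle$ if $x\notin\mathrm{fv}(t)$. $\to_{wm},\to_{we},\to_{wgcv}$ are their closures under weak contexts, $\to_w$ their union, $\to_{w\neg gcv}:=\to_{wm}\cup\to_{we}$. *)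

(* Terms of the weak linear substitution calculus with
   explicit substitutions, represented with de Bruijn indices (so terms are
   identified up to alpha-renaming). *)
From Stdlib Require Import List Arith.
Import ListNotations.

Inductive term : Type :=
| Var : nat -> term
| Lam : term -> term
| App : term -> term -> term
| ES  : term -> term -> term.     (* ES t u = t[x\u] : binds index 0 in t *)

Fixpoint lift (k c : nat) (t : term) : term :=
  match t with
  | Var n => if c <=? n then Var (n + k) else Var n
  | Lam t => Lam (lift k (S c) t)
  | App t u => App (lift k c t) (lift k c u)
  | ES t u => ES (lift k (S c) t) (lift k c u)
  end.

(* Substitution contexts S ::= <.> | S[x\u], as a list whose head is the
   outermost substitution. *)
Definition sctx := list term.

Fixpoint plugS (S : sctx) (t : term) : term :=
  match S with
  | [] => t
  | s :: S' => ES (plugS S' t) s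
  end.

Inductive wctx : Type :=
| WHole : wctx
| WAppL : wctx -> term -> wctx
| WAppR : term -> wctx -> wctx
| WESR  : term -> wctx -> wctx     (* t[x\W] *)
| WESL  : wctx -> term -> wctx.    (* W[x\u] *)

(* plain plugging (may capture): used for closure under weak contexts *)
Fixpoint plugW (W : wctx) (t : term) : term :=
  match W with
  | WHole => t
  | WAppL W u => App (plugW W t) u
  | WAppR s W => App s (plugW W t)
  | WESR s W => ES s (plugW W t)
  | WESL W u => ES (plugW W t) u
  end.

Fixpoint wdepth (W : wctx) : nat :=
  match W with
  | WHole => 0
  | WAppL W _ => wdepth W
  | WAppR _ W => wdepth W
  | WESR _ W => wdepth W
  | WESL W _ => S (wdepth W)
  end.

(* S<\x.t> u |->m S<t[x\u]>  (u is not captured by S) *)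
Inductive root_m : term -> term -> Prop :=
| RootM : forall (S : sctx) t u,
    root_m (App (plugS S (Lam t)) u) (plugS S (ES t (lift (length S) 0 u))).

(* W<<x>>[x\u] |->e W<<u>>[x\u] : the variable bound by the outer
   substitution occurs at the hole of W (index wdepth W there), and u is
   plugged without capture (lifted by the binders above it). *)
Inductive root_e : term -> term -> Prop :=
| RootE : forall (W : wctx) u,
    root_e (ES (plugW W (Var (wdepth W))) u)
           (ES (plugW W (lift (S (wdepth W)) 0 u)) u).

(* t[x\S<v>] |->gcv S<t> if x notin fv(t) : t is (lift 1 0 t0), and t0 is
   placed under S without capture. *)
Inductive root_gcv : term -> term -> Prop :=
| RootGcv : forall (S : sctx) t0 v,
    root_gcv (ES (lift 1 0 t0) (plugS S (Lam v))) (plugS S (lift (length S) 0 t0)).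

Inductive wclos (R : term -> term -> Prop) : term -> term -> Prop :=
| WClos : forall W t u, R t u -> wclos R (plugW W t) (plugW W u).

Definition wm := wclos root_m.
Definition we := wclos root_e.
Definition wgcv := wclos root_gcv.
Definition wneg (t u : term) : Prop := wm t u \/ we t u.
Definition wstep (t u : term) : Prop := wneg t u \/ wgcv t u.

Inductive nsteps (R : term -> term -> Prop) : nat -> term -> term -> Prop :=
| nsteps0 : forall t, nsteps R 0 t t
| nstepsS : forall n t t' u, R t t' -> nsteps R n t' u -> nsteps R (S n) t u.

(* A reduction sequence d : t ->w* u, each step labelled as a w-not-gcv step
   or a wgcv step;  wseq t u k h  means there is such a sequence with k
   w-not-gcv steps and h wgcv steps. *)
Inductive wseq : term -> term -> nat -> nat -> Prop :=
| wseq_refl : forall t, wseq t t 0 0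
| wseq_neg : forall t t' u k h, wneg t t' -> wseq t' u k h -> wseq t u (S k) h
| wseq_gcv : forall t t' u k h, wgcv t t' -> wseq t' u k h -> wseq t u k (S h).

(* A wgcv step followed by a w¬gcv
   step can be replaced by one w¬gcv step followed by m >= 1 wgcv steps, by a
   case analysis on the relative positions of the two redexes.  Disjoint
   redexes commute.  A w¬gcv redex inside the contractum S<t> of the gcv redex
   t[x\S<v>] already occurs inside t or S (the variables bound by S do not
   occur in t).  A w¬gcv redex containing the contractum is already a redex
   before the gcv step, and contracting it copies the gcv redex without ever
   erasing it (an e-step may duplicate it, whence m = 2).  Moving the gcv
   steps to the end one by one thus keeps the number of w¬gcv steps and can
   only increase the number of gcv steps. *)

From Stdlib Require Import List Arith Lia.
Import ListNotations.

Ltac lift_var_cases :=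
  simpl; repeat (match goal with |- context [?a <=? ?b] => destruct (Nat.leb_spec a b) end; simpl);
  try (f_equal; lia); try lia.

Lemma lift_lift_fuse t j k c d :
  c <= d <= c + j -> lift k d (lift j c t) = lift (j + k) c t.
Proof.
  revert j k c d; induction t as [n|t IH|t1 IH1 t2 IH2|t1 IH1 t2 IH2]; intros j k c d Hd.
  - lift_var_cases.
  - simpl; f_equal; apply IH; lia.
  - simpl; f_equal; auto.
  - simpl; f_equal; [apply IH1|apply IH2]; lia.
Qed.

Lemma lift_lift_permute t j k c d :
  c <= d -> lift k c (lift j d t) = lift j (d + k) (lift k c t).
Proof.
  revert j k c d; induction t as [n|t IH|t1 IH1 t2 IH2|t1 IH1 t2 IH2]; intros j k c d Hd.
  - lift_var_cases.
  - simpl; f_equal; replace (S (d + k)) with (S d + k) by lia; apply IH; lia.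
  - simpl; f_equal; auto.
  - simpl; f_equal; [replace (S (d + k)) with (S d + k) by lia; apply IH1|apply IH2]; lia.
Qed.

Lemma lift_var_lt k c n : n < c -> lift k c (Var n) = Var n.
Proof. intros; simpl; destruct (Nat.leb_spec c n); [lia|auto]. Qed.

Lemma lift_var_ge k c n : c <= n -> lift k c (Var n) = Var (n + k).
Proof. intros; simpl; destruct (Nat.leb_spec c n); [auto|lia]. Qed.

Fixpoint lift_sctx (k c : nat) (S : sctx) : sctx :=
  match S with
  | [] => []
  | s :: S' => lift k c s :: lift_sctx k (Datatypes.S c) S'
  end.

Fixpoint lift_wctx (k c : nat) (W : wctx) : wctx :=
  match W with
  | WHole => WHole
  | WAppL W u => WAppL (lift_wctx k c W) (lift k c u)
  | WAppR s W => WAppR (lift k c s) (lift_wctx k c W)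
  | WESR s W => WESR (lift k (S c) s) (lift_wctx k c W)
  | WESL W u => WESL (lift_wctx k (S c) W) (lift k c u)
  end.

Fixpoint wctx_comp (W V : wctx) : wctx :=
  match W with
  | WHole => V
  | WAppL W u => WAppL (wctx_comp W V) u
  | WAppR s W => WAppR s (wctx_comp W V)
  | WESR s W => WESR s (wctx_comp W V)
  | WESL W u => WESL (wctx_comp W V) u
  end.

Fixpoint wctx_of_sctx (S : sctx) : wctx :=
  match S with
  | [] => WHole
  | s :: S' => WESL (wctx_of_sctx S') s
  end.

Lemma length_lift_sctx S k c : length (lift_sctx k c S) = length S.
Proof. revert c; induction S; simpl; auto. Qed.

Lemma wdepth_lift_wctx W k c : wdepth (lift_wctx k c W) = wdepth W.
Proof. revert c; induction W; simpl; auto. Qed.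

Lemma wdepth_comp W V : wdepth (wctx_comp W V) = wdepth W + wdepth V.
Proof. induction W; simpl; auto. Qed.

Lemma wdepth_of_sctx S : wdepth (wctx_of_sctx S) = length S.
Proof. induction S; simpl; auto. Qed.

Lemma plugW_comp W V t : plugW (wctx_comp W V) t = plugW W (plugW V t).
Proof. induction W; simpl; f_equal; auto. Qed.

Lemma plugW_of_sctx S t : plugW (wctx_of_sctx S) t = plugS S t.
Proof. induction S; simpl; f_equal; auto. Qed.

Lemma plugS_app S1 S2 t : plugS (S1 ++ S2) t = plugS S1 (plugS S2 t).
Proof. induction S1; simpl; f_equal; auto. Qed.

Lemma lift_plugS S k c t :
  lift k c (plugS S t) = plugS (lift_sctx k c S) (lift k (c + length S) t).
Proof.
  revert c; induction S; intros c; simpl.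
  - rewrite Nat.add_0_r; auto.
  - rewrite IHS; do 3 f_equal; lia.
Qed.

Lemma lift_plugW W k c t :
  lift k c (plugW W t) = plugW (lift_wctx k c W) (lift k (c + wdepth W) t).
Proof.
  revert c; induction W; intros c; simpl; rewrite ?IHW, ?Nat.add_0_r; auto.
  do 3 f_equal; lia.
Qed.

Lemma lift_inv_App t k c p q : lift k c t = App p q ->
  exists p0 q0, t = App p0 q0 /\ p = lift k c p0 /\ q = lift k c q0.
Proof.
  destruct t as [n| |p0 q0|]; simpl; intros E; try discriminate.
  - destruct (c <=? n); discriminate.
  - injection E as <- <-; eauto.
Qed.

Lemma lift_inv_ES t k c p q : lift k c t = ES p q ->
  exists p0 q0, t = ES p0 q0 /\ p = lift k (S c) p0 /\ q = lift k c q0.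
Proof.
  destruct t as [n| | |p0 q0]; simpl; intros E; try discriminate.
  - destruct (c <=? n); discriminate.
  - injection E as <- <-; eauto.
Qed.

Lemma lift_inv_plugW W t k c x : lift k c t = plugW W x ->
  exists W0 x0, t = plugW W0 x0 /\ W = lift_wctx k c W0 /\ x = lift k (c + wdepth W0) x0.
Proof.
  revert t c; induction W as [|W IH u|s W IH|s W IH|W IH u]; intros t c E.
  - exists WHole, t; rewrite Nat.add_0_r; auto.
  - destruct (lift_inv_App _ _ _ _ _ E) as (p & q & -> & Ep & ->).
    destruct (IH _ _ (eq_sym Ep)) as (W0 & x0 & -> & -> & ->).
    exists (WAppL W0 q), x0; auto.
  - destruct (lift_inv_App _ _ _ _ _ E) as (p & q & -> & -> & Eq).
    destruct (IH _ _ (eq_sym Eq)) as (W0 & x0 & -> & -> & ->).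
    exists (WAppR p W0), x0; auto.
  - destruct (lift_inv_ES _ _ _ _ _ E) as (p & q & -> & -> & Eq).
    destruct (IH _ _ (eq_sym Eq)) as (W0 & x0 & -> & -> & ->).
    exists (WESR p W0), x0; auto.
  - destruct (lift_inv_ES _ _ _ _ _ E) as (p & q & -> & Ep & ->).
    destruct (IH _ _ (eq_sym Ep)) as (W0 & x0 & -> & -> & ->).
    exists (WESL W0 q), x0; simpl; repeat split; f_equal; lia.
Qed.

Lemma lift_inv_plugS S t k c x : lift k c t = plugS S x ->
  exists S0 x0, t = plugS S0 x0 /\ S = lift_sctx k c S0 /\ x = lift k (c + length S0) x0.
Proof.
  revert t c; induction S as [|s S IH]; intros t c E.
  - exists [], t; rewrite Nat.add_0_r; auto.
  - destruct (lift_inv_ES _ _ _ _ _ E) as (p & q & -> & Ep & ->).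
    destruct (IH _ _ (eq_sym Ep)) as (S0 & x0 & -> & -> & ->).
    exists (q :: S0), x0; simpl; repeat split; f_equal; lia.
Qed.

Lemma lift_inv_Lam t k c w : lift k c t = Lam w -> exists w0, t = Lam w0 /\ w = lift k (S c) w0.
Proof.
  destruct t as [n|t| |]; simpl; intros E; try discriminate.
  - destruct (c <=? n); discriminate.
  - injection E as <-; eauto.
Qed.

Lemma lift_inv_Var t k c n : lift k c t = Var n ->
  exists m, t = Var m /\ ((c <= m /\ n = m + k) \/ (m < c /\ n = m)).
Proof.
  destruct t as [m| | |]; simpl; intros E; try discriminate.
  exists m; split; auto; destruct (Nat.leb_spec c m); injection E; lia.
Qed.

Ltac orient_lift H := match type of H with lift _ _ _ = _ => idtac | _ => symmetry in H end.

Lemma plugS_eq_plugS S1 S2 X Y : plugS S1 X = plugS S2 Y ->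
  (exists S3, S1 = S2 ++ S3 /\ Y = plugS S3 X) \/
  (exists S3, S2 = S1 ++ S3 /\ X = plugS S3 Y).
Proof.
  revert S2; induction S1 as [|s S1 IH]; intros [|s' S2]; simpl; intros E.
  - left; exists []; auto.
  - right; exists (s' :: S2); auto.
  - left; exists (s :: S1); auto.
  - injection E as E <-.
    destruct (IH _ E) as [(S3 & -> & ->)|(S3 & -> & ->)]; [left|right]; exists S3; auto.
Qed.

Lemma plugS_eq_plugW S X W c : plugS S X = plugW W c ->
  (exists V, W = wctx_comp (wctx_of_sctx S) V /\ X = plugW V c) \/
  (exists S1 S2, S = S1 ++ S2 /\ S2 <> [] /\ W = wctx_of_sctx S1 /\ c = plugS S2 X) \/
  (exists S1 e S2 V, S = S1 ++ e :: S2 /\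
     W = wctx_comp (wctx_of_sctx S1) (WESR (plugS S2 X) V) /\ e = plugW V c).
Proof.
  revert W; induction S as [|s S IH]; intros W E; simpl in E.
  - left; exists W; auto.
  - destruct W as [| | |t W|W u]; simpl in E; try discriminate.
    + right; left; exists [], (s :: S); repeat split; auto; discriminate.
    + injection E as E1 E2; subst; right; right; exists [], (plugW W c), S, W; auto.
    + injection E as E <-.
      destruct (IH _ E) as
        [(V & -> & ->)|[(S1 & S2 & -> & ? & -> & ->)|(S1 & e & S2 & V & -> & -> & ->)]].
      * left; exists V; auto.
      * right; left; exists (s :: S1), S2; auto.
      * right; right; exists (s :: S1), (plugW V c), S2, V; auto.
Qed.

(* [F] is a weak context with two holes, the first at the position of the
   hole of [W1] and the second at that of [W2]. *)
Definition wctx_disjoint (W1 : wctx) (a : term) (W2 : wctx) (b : term) : Prop :=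
  exists F : term -> term -> term,
    (forall x, plugW W1 x = F x b) /\ (forall y, plugW W2 y = F a y) /\
    (forall y, exists W, wdepth W = wdepth W1 /\ forall x, F x y = plugW W x) /\
    (forall x, exists W, wdepth W = wdepth W2 /\ forall y, F x y = plugW W y).

Lemma wctx_disjoint_sym W1 a W2 b : wctx_disjoint W1 a W2 b -> wctx_disjoint W2 b W1 a.
Proof.
  intros (F & H1 & H2 & H3 & H4); exists (fun y x => F x y); auto.
Qed.

Lemma wctx_disjoint_comp U W1 a W2 b :
  wctx_disjoint W1 a W2 b -> wctx_disjoint (wctx_comp U W1) a (wctx_comp U W2) b.
Proof.
  intros (F & H1 & H2 & H3 & H4).
  exists (fun x y => plugW U (F x y)); repeat split; intros.
  - rewrite plugW_comp, H1; auto.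
  - rewrite plugW_comp, H2; auto.
  - destruct (H3 y) as (W & Hd & HW); exists (wctx_comp U W).
    rewrite !wdepth_comp, Hd; split; auto; intros; rewrite plugW_comp, HW; auto.
  - destruct (H4 x) as (W & Hd & HW); exists (wctx_comp U W).
    rewrite !wdepth_comp, Hd; split; auto; intros; rewrite plugW_comp, HW; auto.
Qed.

Lemma wctx_disjoint_App W1 a W2 b :
  wctx_disjoint (WAppL W1 (plugW W2 b)) a (WAppR (plugW W1 a) W2) b.
Proof.
  exists (fun x y => App (plugW W1 x) (plugW W2 y)); repeat split; auto.
  - intros y; exists (WAppL W1 (plugW W2 y)); auto.
  - intros x; exists (WAppR (plugW W1 x) W2); auto.
Qed.

Lemma wctx_disjoint_ES W1 a W2 b :
  wctx_disjoint (WESL W1 (plugW W2 b)) a (WESR (plugW W1 a) W2) b.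
Proof.
  exists (fun x y => ES (plugW W1 x) (plugW W2 y)); repeat split; auto.
  - intros y; exists (WESL W1 (plugW W2 y)); auto.
  - intros x; exists (WESR (plugW W1 x) W2); auto.
Qed.

Ltac same_layer IH E U :=
  destruct (IH _ _ _ E) as [(V & -> & ->)|[(V & ? & -> & ->)|D]];
  [left; exists V; auto|right; left; exists V; auto
  |right; right; exact (wctx_disjoint_comp U _ _ _ _ D)].

Lemma plugW_eq_plugW W1 a W2 b : plugW W1 a = plugW W2 b ->
  (exists V, W2 = wctx_comp W1 V /\ a = plugW V b) \/
  (exists V, V <> WHole /\ W1 = wctx_comp W2 V /\ b = plugW V a) \/
  wctx_disjoint W1 a W2 b.
Proof.
  revert a W2 b; induction W1 as [|W1 IH u|s W1 IH|s W1 IH|W1 IH u]; intros a W2 b E.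
  { left; exists W2; auto. }
  all: destruct W2 as [|W2 u'|s' W2|s' W2|W2 u']; simpl in E; try discriminate;
    [right; left; subst b;
     match goal with |- exists V, _ /\ ?W = _ /\ _ => exists W; repeat split; discriminate end
    |injection E as E1 E2; subst..].
  - same_layer IH E1 (WAppL WHole u').
  - right; right; apply wctx_disjoint_App.
  - right; right; apply wctx_disjoint_sym, wctx_disjoint_App.
  - same_layer IH E2 (WAppR s' WHole).
  - same_layer IH E2 (WESR s' WHole).
  - right; right; apply wctx_disjoint_sym, wctx_disjoint_ES.
  - right; right; apply wctx_disjoint_ES.
  - same_layer IH E1 (WESL WHole u').
Qed.

Definition root_neg (t u : term) : Prop := root_m t u \/ root_e t u.

Lemma rel_of_eq (R : term -> term -> Prop) t u t' u' : R t' u' -> t = t' -> u = u' -> R t u.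
Proof. intros; subst; auto. Qed.

Lemma wclos_root (R : term -> term -> Prop) t u : R t u -> wclos R t u.
Proof. apply (WClos R WHole). Qed.

Lemma wclos_plugW R W t u : wclos R t u -> wclos R (plugW W t) (plugW W u).
Proof. intros [W0 t0 u0 H]; rewrite <- !plugW_comp; constructor; auto. Qed.

Lemma wneg_inv t u : wneg t u ->
  exists W c c', root_neg c c' /\ t = plugW W c /\ u = plugW W c'.
Proof. intros [[W c c' H]|[W c c' H]]; exists W, c, c'; unfold root_neg; auto. Qed.

Lemma wneg_root W c c' : root_neg c c' -> wneg (plugW W c) (plugW W c').
Proof. intros [H|H]; [left|right]; constructor; auto. Qed.

Lemma wneg_plugW W t u : wneg t u -> wneg (plugW W t) (plugW W u).
Proof. intros [H|H]; [left|right]; apply wclos_plugW; auto. Qed.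

Lemma wgcv_plugW W t u : wgcv t u -> wgcv (plugW W t) (plugW W u).
Proof. apply wclos_plugW. Qed.

Lemma wgcv_root S t0 v :
  wgcv (ES (lift 1 0 t0) (plugS S (Lam v))) (plugS S (lift (length S) 0 t0)).
Proof. apply wclos_root; constructor. Qed.

Lemma nsteps_one (R : term -> term -> Prop) t u : R t u -> nsteps R 1 t u.
Proof. intros; econstructor; eauto; constructor. Qed.

Lemma nsteps_add R n m t s u : nsteps R n t s -> nsteps R m s u -> nsteps R (n + m) t u.
Proof. induction 1; intros; simpl; auto; econstructor; eauto. Qed.

Lemma nsteps_wgcv_plugW n W t u : nsteps wgcv n t u -> nsteps wgcv n (plugW W t) (plugW W u).
Proof. induction 1; econstructor; eauto using wgcv_plugW. Qed.

Lemma lift_root_m_contractum L t u k c :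
  lift k c (plugS L (ES t (lift (length L) 0 u))) =
  plugS (lift_sctx k c L)
    (ES (lift k (S (c + length L)) t) (lift (length (lift_sctx k c L)) 0 (lift k c u))).
Proof.
  rewrite lift_plugS, length_lift_sctx; simpl.
  rewrite (lift_lift_permute u k (length L) 0 c) by lia; auto.
Qed.

Lemma lift_root_e_contractum W u k c :
  lift k c (ES (plugW W (lift (S (wdepth W)) 0 u)) u) =
  ES (plugW (lift_wctx k (S c) W) (lift (S (wdepth (lift_wctx k (S c) W))) 0 (lift k c u)))
     (lift k c u).
Proof.
  simpl; rewrite lift_plugW, wdepth_lift_wctx.
  rewrite (lift_lift_permute u k (S (wdepth W)) 0 c) by lia.
  replace (c + S (wdepth W)) with (S c + wdepth W) by lia; auto.
Qed.

Lemma lift_root_gcv_contractum L t0 k c :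
  lift k c (plugS L (lift (length L) 0 t0)) =
  plugS (lift_sctx k c L) (lift (length (lift_sctx k c L)) 0 (lift k c t0)).
Proof.
  rewrite lift_plugS, length_lift_sctx.
  rewrite (lift_lift_permute t0 k (length L) 0 c) by lia; auto.
Qed.

Lemma root_m_lift t u k c : root_m t u -> root_m (lift k c t) (lift k c u).
Proof.
  intros [L t0 u0]; rewrite lift_root_m_contractum; simpl; rewrite lift_plugS; constructor.
Qed.

Lemma root_e_lift t u k c : root_e t u -> root_e (lift k c t) (lift k c u).
Proof.
  intros [W u0]; rewrite lift_root_e_contractum; simpl; rewrite lift_plugW.
  rewrite lift_var_lt by lia.
  rewrite <- (wdepth_lift_wctx W k (S c)) at 1; constructor.
Qed.

Lemma root_gcv_lift t u k c : root_gcv t u -> root_gcv (lift k c t) (lift k c u).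
Proof.
  intros [L t0 v]; rewrite lift_root_gcv_contractum; simpl; rewrite lift_plugS; simpl.
  replace (lift k (S c) (lift 1 0 t0)) with (lift 1 0 (lift k c t0)); [constructor|].
  rewrite (lift_lift_permute t0 k 1 0 c), Nat.add_1_r by lia; auto.
Qed.

Lemma wclos_lift (R : term -> term -> Prop) t u k c :
  (forall t u k c, R t u -> R (lift k c t) (lift k c u)) ->
  wclos R t u -> wclos R (lift k c t) (lift k c u).
Proof. intros HR [W t0 u0 H]; rewrite !lift_plugW; constructor; auto. Qed.

Lemma wneg_lift t u k c : wneg t u -> wneg (lift k c t) (lift k c u).
Proof.
  intros [H|H]; [left|right]; apply wclos_lift; auto using root_m_lift, root_e_lift.
Qed.

Lemma wgcv_lift t u k c : wgcv t u -> wgcv (lift k c t) (lift k c u).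
Proof. apply wclos_lift; auto using root_gcv_lift. Qed.

Lemma root_m_unlift t y k c : root_m (lift k c t) y -> exists y0, root_m t y0 /\ y = lift k c y0.
Proof.
  intros H; inversion H as [L w u E]; subst y; orient_lift E.
  destruct (lift_inv_App _ _ _ _ _ E) as (p0 & q0 & -> & Ep & ->); orient_lift Ep.
  destruct (lift_inv_plugS _ _ _ _ _ Ep) as (L0 & x0 & -> & -> & Ex); orient_lift Ex.
  destruct (lift_inv_Lam _ _ _ _ Ex) as (w0 & -> & ->).
  exists (plugS L0 (ES w0 (lift (length L0) 0 q0))); split; [constructor|].
  rewrite lift_root_m_contractum, Nat.add_comm; auto.
Qed.

Lemma root_e_unlift t y k c : root_e (lift k c t) y -> exists y0, root_e t y0 /\ y = lift k c y0.
Proof.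
  intros H; inversion H as [W u E]; subst y; orient_lift E.
  destruct (lift_inv_ES _ _ _ _ _ E) as (p0 & q0 & -> & Ep & ->); orient_lift Ep.
  destruct (lift_inv_plugW _ _ _ _ _ Ep) as (W0 & x0 & -> & -> & Ex); orient_lift Ex.
  destruct (lift_inv_Var _ _ _ _ Ex) as (m & -> & Hm); rewrite wdepth_lift_wctx in Hm.
  replace m with (wdepth W0) by lia.
  exists (ES (plugW W0 (lift (S (wdepth W0)) 0 q0)) q0); split; [constructor|].
  rewrite lift_root_e_contractum, wdepth_lift_wctx; auto.
Qed.

Lemma root_neg_unlift t y k c : root_neg (lift k c t) y ->
  exists y0, root_neg t y0 /\ y = lift k c y0.
Proof.
  intros [H|H].
  - destruct (root_m_unlift _ _ _ _ H) as (y0 & ? & ?); exists y0; split; [left|]; auto.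
  - destruct (root_e_unlift _ _ _ _ H) as (y0 & ? & ?); exists y0; split; [right|]; auto.
Qed.

Lemma wneg_unlift t y k c : wneg (lift k c t) y -> exists y0, wneg t y0 /\ y = lift k c y0.
Proof.
  intros H; destruct (wneg_inv _ _ H) as (W & x & x' & Hr & E & ->).
  destruct (lift_inv_plugW _ _ _ _ _ E) as (W0 & x0 & -> & -> & ->).
  destruct (root_neg_unlift _ _ _ _ Hr) as (x0' & Hr0 & ->).
  exists (plugW W0 x0'); split; [apply wneg_root; auto|rewrite lift_plugW; auto].
Qed.

Definition wneg_wgcv_plus (t u : term) : Prop :=
  exists x m, wneg t x /\ 1 <= m /\ nsteps wgcv m x u.

Lemma wneg_wgcv_plus_intro t x u : wneg t x -> wgcv x u -> wneg_wgcv_plus t u.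
Proof. intros; exists x, 1; auto using nsteps_one. Qed.

Lemma wneg_wgcv_plus_plugW W t u : wneg_wgcv_plus t u -> wneg_wgcv_plus (plugW W t) (plugW W u).
Proof.
  intros (x & m & ? & ? & ?); exists (plugW W x), m; auto using wneg_plugW, nsteps_wgcv_plugW.
Qed.

Ltac simpl_plug :=
  repeat (first [rewrite plugW_comp | rewrite plugW_of_sctx | rewrite plugS_app | progress simpl]).
Ltac simpl_length :=
  repeat (first [rewrite length_app | rewrite length_lift_sctx | progress simpl]).
Ltac f_equal_lia := repeat (match goal with |- @eq nat _ _ => lia | |- _ => progress f_equal end).

(* The lifted [t0] at the bottom cannot contain the variable bound by [s],
   so the occurrence being replaced lies in one of the substitutions of [L]. *)
Lemma root_e_plugS_lift_inv s L n t0 c :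
  root_e (plugS (s :: L) (lift (n + length (s :: L)) 0 t0)) c ->
  exists L', length L' = length (s :: L) /\
    c = plugS L' (lift (n + length (s :: L)) 0 t0) /\
    forall Y, root_e (plugS (s :: L) Y) (plugS L' Y).
Proof.
  intros H; set (X := lift (n + length (s :: L)) 0 t0) in *.
  remember (plugS (s :: L) X) as T eqn:ET; destruct H as [W u].
  cbn [plugS] in ET; injection ET as E ->.
  remember (wdepth W) as d eqn:Hd.
  destruct (plugS_eq_plugW _ _ _ _ (eq_sym E)) as
    [(V & -> & HX)|[(S1 & S2 & _ & ? & -> & HS)|(P & e & Q & V & -> & -> & ->)]].
  - unfold X in HX; orient_lift HX.
    destruct (lift_inv_plugW _ _ _ _ _ HX) as (V0 & y0 & _ & -> & Hy).
    orient_lift Hy; destruct (lift_inv_Var _ _ _ _ Hy) as (j & -> & Hj).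
    rewrite wdepth_comp, wdepth_of_sctx, wdepth_lift_wctx in Hd; simpl in Hj; lia.
  - destruct S2; [congruence|discriminate].
  - exists (s :: P ++ plugW V (lift (S d) 0 s) :: Q); repeat split.
    + simpl_length; auto.
    + simpl_plug; auto.
    + intros Y; set (WY := wctx_comp (wctx_of_sctx P) (WESR (plugS Q Y) V)).
      assert (HdY : wdepth WY = d) by (rewrite Hd; unfold WY; rewrite !wdepth_comp; auto).
      pose proof (RootE WY s) as HY; rewrite HdY in HY.
      apply (rel_of_eq _ _ _ _ _ HY); subst WY; simpl_plug; auto.
Qed.

Lemma root_gcv_then_wneg L t0 v y : wneg (plugS L (lift (length L) 0 t0)) y ->
  wneg_wgcv_plus (ES (lift 1 0 t0) (plugS L (Lam v))) y.
Proof.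
  intros H; destruct (wneg_inv _ _ H) as (W & c & c' & Hr & E & ->).
  destruct (plugS_eq_plugW _ _ _ _ E) as
    [(V & -> & HX)|[(S1 & S2 & -> & ? & -> & ->)|(S1 & e & S2 & V & -> & -> & ->)]].
  - assert (Hn : wneg (lift (length L) 0 t0) (plugW V c'))
      by (rewrite HX; apply wneg_root; auto).
    destruct (wneg_unlift _ _ _ _ Hn) as (t0' & Ht0 & Ht0').
    apply (wneg_wgcv_plus_intro _ (ES (lift 1 0 t0') (plugS L (Lam v)))).
    + apply (wneg_plugW (WESL WHole (plugS L (Lam v)))), wneg_lift; auto.
    + rewrite plugW_comp, plugW_of_sctx, Ht0'; apply wgcv_root.
  - destruct S2 as [|s S2]; [congruence|].
    destruct Hr as [Hm|He]; [inversion Hm|].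
    rewrite length_app in He.
    destruct (root_e_plugS_lift_inv _ _ _ _ _ He) as (L' & HL' & -> & HY).
    apply (wneg_wgcv_plus_intro _ (ES (lift 1 0 t0) (plugS (S1 ++ L') (Lam v)))).
    + apply (rel_of_eq _ _ _ _ _
        (wneg_root (WESR (lift 1 0 t0) (wctx_of_sctx S1)) _ _ (or_intror (HY (Lam v)))));
        simpl_plug; auto.
    + apply (rel_of_eq _ _ _ _ _ (wgcv_root (S1 ++ L') t0 v)); auto.
      simpl_plug; rewrite !length_app, HL'; auto.
  - apply (wneg_wgcv_plus_intro _ (ES (lift 1 0 t0) (plugS (S1 ++ plugW V c' :: S2) (Lam v)))).
    + apply (rel_of_eq _ _ _ _ _ (wneg_root
        (WESR (lift 1 0 t0) (wctx_comp (wctx_of_sctx S1) (WESR (plugS S2 (Lam v)) V))) _ _ Hr));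
        simpl_plug; auto.
    + apply (rel_of_eq _ _ _ _ _ (wgcv_root (S1 ++ plugW V c' :: S2) t0 v)); auto.
      simpl_plug; rewrite !length_app; auto.
Qed.

(* [t0] is itself an answer [S3<\w0>], so the redex is already an m-redex
   before the gcv step, with the gcv redex in its substitution context. *)
Lemma gcv_in_answer_then_root_m S1 S2 Sv t0 v w u :
  plugS S2 (Lam w) = plugS Sv (lift (length Sv) 0 t0) ->
  wneg_wgcv_plus (App (plugS S1 (ES (lift 1 0 t0) (plugS Sv (Lam v)))) u)
                 (plugS (S1 ++ S2) (ES w (lift (length (S1 ++ S2)) 0 u))).
Proof.
  intros E.
  assert (exists S3, S2 = Sv ++ S3 /\ lift (length Sv) 0 t0 = plugS S3 (Lam w))
    as (S3 & -> & E3).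
  { destruct (plugS_eq_plugS _ _ _ _ E) as [(S3 & -> & ?)|([|s S3] & -> & HX)].
    - exists S3; auto.
    - exists []; rewrite !app_nil_r in *; split; [|symmetry]; auto.
    - discriminate. }
  destruct (lift_inv_plugS _ _ _ _ _ E3) as (S3' & y0 & -> & -> & Ey); orient_lift Ey.
  destruct (lift_inv_Lam _ _ _ _ Ey) as (w0 & -> & ->).
  set (Lm := S1 ++ plugS Sv (Lam v) :: lift_sctx 1 0 S3').
  apply (wneg_wgcv_plus_intro _
    (plugS Lm (ES (lift 1 (S (length S3')) w0) (lift (length Lm) 0 u)))).
  - apply (rel_of_eq _ _ _ _ _
      (wneg_root WHole _ _ (or_introl (RootM Lm (lift 1 (S (length S3')) w0) u)))); auto.
    unfold Lm; simpl_plug; rewrite lift_plugS; auto.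
  - apply (rel_of_eq _ _ _ _ _ (wgcv_plugW (wctx_of_sctx S1) _ _
      (wgcv_root Sv (plugS S3' (ES w0 (lift (length S1 + length S3') 0 u))) v)));
      unfold Lm; simpl_plug; rewrite lift_plugS; simpl;
      rewrite (lift_lift_fuse u) by lia; simpl_length; f_equal_lia.
Qed.

Lemma gcv_in_fun_then_root_m a a' V L w u : root_gcv a a' ->
  plugS L (Lam w) = plugW V a' ->
  wneg_wgcv_plus (App (plugW V a) u) (plugS L (ES w (lift (length L) 0 u))).
Proof.
  intros [Sv t0 v] E.
  destruct (plugS_eq_plugW _ _ _ _ E) as
    [(V' & -> & HX)|[(S1 & S2 & -> & _ & -> & HS)|(S1 & e & S2 & V' & -> & -> & ->)]].
  - destruct V'; simpl in HX; try discriminate.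
    pose proof (gcv_in_answer_then_root_m L [] Sv t0 v w u HX) as H.
    rewrite app_nil_r in H; rewrite plugW_comp, plugW_of_sctx; exact H.
  - rewrite plugW_of_sctx; apply gcv_in_answer_then_root_m; auto.
  - set (L' := S1 ++ plugW V' (ES (lift 1 0 t0) (plugS Sv (Lam v))) :: S2).
    apply (wneg_wgcv_plus_intro _ (plugS L' (ES w (lift (length L') 0 u)))).
    + apply (rel_of_eq _ _ _ _ _ (wneg_root WHole _ _ (or_introl (RootM L' w u)))); auto.
      unfold L'; simpl_plug; auto.
    + apply (rel_of_eq _ _ _ _ _ (wgcv_plugW
        (wctx_comp (wctx_of_sctx S1) (WESR (plugS S2 (ES w (lift (length L') 0 u))) V')) _ _
        (wgcv_root Sv t0 v))); unfold L'; simpl_plug; simpl_length; auto.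
Qed.

Lemma gcv_in_arg_then_root_m a a' V L w : root_gcv a a' ->
  wneg_wgcv_plus (App (plugS L (Lam w)) (plugW V a))
                 (plugS L (ES w (lift (length L) 0 (plugW V a')))).
Proof.
  intros Hg; apply (wneg_wgcv_plus_intro _ (plugS L (ES w (lift (length L) 0 (plugW V a))))).
  - apply (wneg_root WHole _ _ (or_introl (RootM L w _))).
  - rewrite <- !plugW_of_sctx.
    apply (wgcv_plugW (wctx_of_sctx L) (ES w _) (ES w _) (wgcv_plugW (WESR w WHole) _ _
      (wgcv_lift _ _ _ _ (wgcv_plugW V _ _ (wclos_root _ _ _ Hg))))).
Qed.

(* The e-step duplicates the substituted term, hence the gcv redex. *)
Lemma gcv_in_subst_then_root_e a a' V W : root_gcv a a' ->
  wneg_wgcv_plus (ES (plugW W (Var (wdepth W))) (plugW V a))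
                 (ES (plugW W (lift (S (wdepth W)) 0 (plugW V a'))) (plugW V a')).
Proof.
  intros Hg; assert (HA : wgcv (plugW V a) (plugW V a')) by apply wgcv_plugW, wclos_root, Hg.
  exists (ES (plugW W (lift (S (wdepth W)) 0 (plugW V a))) (plugW V a)), 2.
  split; [|split; [lia|]].
  - apply (wneg_root WHole _ _ (or_intror (RootE W _))).
  - econstructor; [apply (wgcv_plugW (WESL W _)), wgcv_lift, HA|].
    apply nsteps_one, (wgcv_plugW (WESR _ WHole)), HA.
Qed.

Lemma root_gcv_var_origin a a' V i : root_gcv a a' ->
  a' = plugW V (Var (wdepth V + i)) ->
  exists U, a = plugW U (Var (wdepth U + i)) /\
    forall s, root_gcv (plugW U (lift (wdepth U) 0 s)) (plugW V (lift (wdepth V) 0 s)).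
Proof.
  intros [Sv t0 v] E.
  destruct (plugS_eq_plugW _ _ _ _ E) as
    [(V' & -> & HX)|[(S1 & S2 & _ & ? & -> & HS)|(S1 & e & S2 & V' & -> & -> & ->)]].
  - orient_lift HX; destruct (lift_inv_plugW _ _ _ _ _ HX) as (U0 & y0 & -> & -> & Ey).
    orient_lift Ey; destruct (lift_inv_Var _ _ _ _ Ey) as (j & -> & Hj).
    rewrite wdepth_comp, wdepth_of_sctx, wdepth_lift_wctx in Hj.
    exists (WESL (lift_wctx 1 0 U0) (plugS Sv (Lam v))); split.
    + simpl; rewrite lift_plugW, lift_var_ge, wdepth_lift_wctx by lia; f_equal_lia.
    + intros s.
      apply (rel_of_eq _ _ _ _ _ (RootGcv Sv (plugW U0 (lift (wdepth U0) 0 s)) v));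
        simpl_plug; rewrite lift_plugW, ?wdepth_lift_wctx, lift_lift_fuse by lia;
        rewrite ?wdepth_comp, ?wdepth_of_sctx, ?wdepth_lift_wctx; f_equal_lia.
  - destruct S2; [congruence|discriminate].
  - exists (WESR (lift 1 0 t0) (wctx_comp (wctx_of_sctx S1) (WESR (plugS S2 (Lam v)) V'))).
    split; [simpl_plug; rewrite !wdepth_comp; auto|].
    intros s.
    apply (rel_of_eq _ _ _ _ _
      (RootGcv (S1 ++ plugW V' (lift (length S1 + wdepth V') 0 s) :: S2) t0 v));
      simpl_plug; rewrite ?wdepth_comp, ?wdepth_of_sctx; simpl_length; auto.
Qed.

Lemma gcv_in_body_then_root_e a a' V W u : root_gcv a a' ->
  plugW W (Var (wdepth W)) = plugW V a' ->
  wneg_wgcv_plus (ES (plugW V a) u) (ES (plugW W (lift (S (wdepth W)) 0 u)) u).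
Proof.
  intros Hg E.
  destruct (plugW_eq_plugW _ _ _ _ (eq_sym E)) as [(V' & -> & Ha)|[(U & ? & -> & Hb)|D]].
  - rewrite wdepth_comp, Nat.add_comm in Ha.
    destruct (root_gcv_var_origin _ _ _ _ Hg Ha) as (U & -> & HU).
    apply (wneg_wgcv_plus_intro _ (ES (plugW V (plugW U (lift (S (wdepth V + wdepth U)) 0 u))) u)).
    + apply (rel_of_eq _ _ _ _ _ (wneg_root WHole _ _ (or_intror (RootE (wctx_comp V U) u))));
        simpl; rewrite plugW_comp, wdepth_comp; f_equal_lia.
    + apply (rel_of_eq _ _ _ _ _ (wgcv_plugW (WESL V u) _ _
        (wclos_root _ _ _ (HU (lift (S (wdepth V)) 0 u)))));
        simpl; rewrite ?plugW_comp, ?wdepth_comp, lift_lift_fuse by lia; f_equal_lia.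
  - destruct U; simpl in Hb; congruence.
  - destruct D as (F & HV & HW & HF1 & HF2).
    destruct (HF2 a) as (Wa & HWa & HFa).
    destruct (HF1 (lift (S (wdepth W)) 0 u)) as (Wu & _ & HFu).
    apply (wneg_wgcv_plus_intro _ (ES (F a (lift (S (wdepth W)) 0 u)) u)).
    + apply (rel_of_eq _ _ _ _ _ (wneg_root WHole _ _ (or_intror (RootE Wa u))));
        simpl; rewrite ?HV, ?HFa, HWa; auto.
    + apply (rel_of_eq _ _ _ _ _ (wgcv_plugW (WESL Wu u) _ _ (wclos_root _ _ _ Hg)));
        simpl; rewrite <- ?HFu, ?HW; auto.
Qed.

Lemma gcv_then_root_neg a a' V c c' : root_gcv a a' -> root_neg c c' ->
  c = plugW V a' -> V <> WHole -> wneg_wgcv_plus (plugW V a) c'.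
Proof.
  intros Hg [[L w u]|[W u]] Hc HV;
    destruct V as [|V u'|s V|s V|V u']; simpl in Hc; try discriminate; try congruence;
    injection Hc as E1 E2; subst.
  - apply (gcv_in_fun_then_root_m _ _ _ _ _ _ Hg E1).
  - apply (gcv_in_arg_then_root_m _ _ _ _ _ Hg).
  - apply (gcv_in_subst_then_root_e _ _ _ _ Hg).
  - apply (gcv_in_body_then_root_e _ _ _ _ _ Hg E1).
Qed.

Lemma wgcv_then_wneg t t1 t2 : wgcv t t1 -> wneg t1 t2 -> wneg_wgcv_plus t t2.
Proof.
  intros [W1 a a' Hg] Hn.
  destruct (wneg_inv _ _ Hn) as (W2 & c & c' & Hr & E & ->).
  destruct (plugW_eq_plugW _ _ _ _ E) as [(V & -> & Ha)|[(V & HV & -> & Hc)|D]].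
  - rewrite plugW_comp; apply wneg_wgcv_plus_plugW.
    destruct Hg as [Sv t0 v]; apply root_gcv_then_wneg.
    rewrite Ha; apply wneg_root; auto.
  - rewrite plugW_comp; apply wneg_wgcv_plus_plugW.
    apply (gcv_then_root_neg _ _ _ _ _ Hg Hr Hc HV).
  - destruct D as (F & HW1 & HW2 & HF1 & HF2).
    destruct (HF2 a) as (Wa & _ & HFa); destruct (HF1 c') as (Wc & _ & HFc).
    apply (wneg_wgcv_plus_intro _ (F a c')).
    + rewrite HW1, !HFa; apply wneg_root; auto.
    + rewrite HW2, !HFc; apply wgcv_plugW, wclos_root; auto.
Qed.

Lemma wgcvs_then_wneg n t t1 t2 : nsteps wgcv n t t1 -> wneg t1 t2 ->
  exists x m, wneg t x /\ n <= m /\ nsteps wgcv m x t2.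
Proof.
  intros H; revert t2; induction H as [t|n t t' t1 Hg H IH]; intros t2 Hn.
  - exists t2, 0; repeat split; auto; constructor.
  - destruct (IH _ Hn) as (x & m & Hx & Hm & Hxs).
    destruct (wgcv_then_wneg _ _ _ Hg Hx) as (y & m' & Hy & Hm' & Hys).
    exists y, (m' + m); repeat split; auto; [lia|eapply nsteps_add; eauto].
Qed.

Lemma wgcvs_then_wnegs k t1 s n t : nsteps wneg k t1 s -> nsteps wgcv n t t1 ->
  exists s' m, nsteps wneg k t s' /\ n <= m /\ nsteps wgcv m s' s.
Proof.
  intros H; revert n t; induction H as [t1|k t1 t1' s Hn H IH]; intros n t Hg.
  - exists t, n; repeat split; auto; constructor.
  - destruct (wgcvs_then_wneg _ _ _ _ Hg Hn) as (x & m & Hx & Hm & Hxs).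
    destruct (IH _ _ Hxs) as (s' & m' & Hs' & Hm' & Hs's).
    exists s', m'; repeat split; [econstructor; eauto|lia|auto].
Qed.

Theorem proposition4p4 :
  forall (t u : term) (k h : nat),
    wseq t u k h ->
    exists (h' : nat) (s : term),
      h <= h' /\ nsteps wneg k t s /\ nsteps wgcv h' s u.
Proof.
  induction 1 as [t|t t' u k h Hn _ IH|t t' u k h Hg _ IH].
  - exists 0, t; repeat split; constructor.
  - destruct IH as (h' & s & Hh & Hs & Hsu).
    exists h', s; repeat split; [auto|econstructor; eauto|auto].
  - destruct IH as (h' & s & Hh & Hs & Hsu).
    destruct (wgcvs_then_wnegs _ _ _ _ _ Hs (nsteps_one _ _ _ Hg)) as (s' & m & Hs' & Hm & Hs's).
    exists (m + h'), s'; repeat split; [lia|auto|eapply nsteps_add; eauto].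
Qed.
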